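(* Let $G=(V,E)$ be a simple undirected graph on $n$ nodes, let $0<\epsilon<\frac13$, $\delta>0$, $p\in(0,1)$, and let $D\subseteq V$ be an $\epsilon^3$-near clique with $|D|\ge\delta n$; let $C=K_{\epsilon^2}(D)\cap D$. Let $S^{(1)}$ be a random subset of $V$ containing each node independently with probability $p/2$, and let $X^*=S^{(1)}\cap C$. Call $X^*$ representative if (1) $|K_{\epsilon^2}(D)\setminus K_{2\epsilon^2}(X^* )|<\epsilon|C|$ and (2) $|K_{2\epsilon^2}(X^* )\setminus K_{3\epsilon^2}(C)|<\epsilon^2|C|$. Then, for every outcome in which $X^*$ is representative, $|C\setminus T_\epsilon(X^* )|\le\frac{11}{2}\epsilon|C|$.
   Context: $\Gamma(v)$ denotes the set of neighbors of $v$. For $Y\subseteq V$ and $0\le\eta\le1$: $K_\eta(Y)=\{v\in V: |\Gamma(v)\cap Y|\ge(1-\eta)|Y|\}$, and $T_\epsilon(X)=K_\epsilon(K_{2\epsilon^2}(X))\cap K_{2\epsilon^2}(X)$. Each undirected edge is counted as two directed edges; a set $D\subseteq V$ is a $\gamma$-near clique if $|\{(u,v)\in D\times D:\{u,v\}\in E\}|\ge(1-\gamma)|D|(|D|-1)$. *)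

From HB Require Import structures.
From mathcomp Require Import all_boot all_order all_algebra.
Set Implicit Arguments. Unset Strict Implicit. Unset Printing Implicit Defensive.
Import Order.TTheory GRing.Theory Num.Theory.
Local Open Scope ring_scope.

Definition simple_graph (V : finType) (e : rel V) : Prop :=
  symmetric e /\ irreflexive e.

Definition nbrs_in (V : finType) (e : rel V) (v : V) (Y : {set V}) : {set V} :=
  [set u in Y | e v u].

Definition Kset (R : realFieldType) (V : finType) (e : rel V)
    (eta : R) (Y : {set V}) : {set V} :=
  [set v | (1 - eta) * (#|Y|%:R) <= (#|nbrs_in e v Y|%:R : R)].

Definition Tset (R : realFieldType) (V : finType) (e : rel V)
    (eps : R) (X : {set V}) : {set V} :=
  Kset e eps (Kset e (2 * eps ^+ 2) X) :&: Kset e (2 * eps ^+ 2) X.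

Definition near_clique (R : realFieldType) (V : finType) (e : rel V)
    (gamma : R) (D : {set V}) : Prop :=
  (1 - gamma) * (#|D|%:R) * (#|D|%:R - 1)
    <= (#|[set uv in setX D D | e uv.1 uv.2]|%:R : R).

(* Write [Ks = K_{2 eps^2}(X)].  A vertex of [C] outside [T_eps(X)] either
   misses [Ks], which by the first representativeness condition happens for
   fewer than [eps |C|] vertices, or has more than [eps |Ks|] non-neighbours in
   [Ks].  Double counting the non-edges between [C] and [Ks] bounds the latter:
   a vertex of [Ks] inside [K_{3 eps^2}(C)] has at most [3 eps^2 |C|]
   non-neighbours in [C], and by the second condition fewer than [eps^2 |C|]
   vertices of [Ks] lie outside.  Since [|Ks| >= (1 - eps) |C| >= 2/3 |C|],
   this leaves at most [9/2 eps |C|] such vertices. *)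

From HB Require Import structures.
From mathcomp Require Import all_boot all_order all_algebra.
From mathcomp Require Import ring lra.
Set Implicit Arguments.
Unset Strict Implicit.
Unset Printing Implicit Defensive.
Import Order.TTheory GRing.Theory Num.Theory.
Local Open Scope ring_scope.

Section NonNeighbours.

Variables (R : realFieldType) (V : finType) (e : rel V).

Definition non_adj (v : V) (Y : {set V}) : nat := (\sum_(u in Y) ~~ e v u)%N.

Lemma card_nbrs_in_non_adj v Y : (#|nbrs_in e v Y| + non_adj v Y)%N = #|Y|.
Proof.
rewrite -(cardsID [set u | e v u] Y); congr (_ + _)%N.
  by apply: eq_card => u; rewrite !inE andbC.
rewrite /non_adj (big_setID [set u | e v u]) /= big1 ?add0n; last first.
  by move=> u; rewrite !inE => /andP[_ ->].
rewrite -sum1_card; apply: eq_bigr => u.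
by rewrite !inE => /andP[/negbTE -> _].
Qed.

Lemma non_adj_le_card v Y : (non_adj v Y <= #|Y|)%N.
Proof. by rewrite -(card_nbrs_in_non_adj v Y) leq_addl. Qed.

Lemma mem_Kset (eta : R) v Y :
  (v \in Kset e eta Y) = ((non_adj v Y)%:R <= eta * #|Y|%:R).
Proof.
have card_nbrs : (#|nbrs_in e v Y|%:R : R) = #|Y|%:R - (non_adj v Y)%:R.
  by rewrite -(card_nbrs_in_non_adj v Y) natrD addrK.
by rewrite inE card_nbrs; apply/idP/idP; lra.
Qed.

Lemma card_setD_Kset_mul_le (eta : R) A Y :
  #|A :\: Kset e eta Y|%:R * (eta * #|Y|%:R) <= (\sum_(v in A) non_adj v Y)%:R.
Proof.
rewrite natr_sum (big_setID (Kset e eta Y)) /=.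
apply: le_trans (_ : _ <= \sum_(v in A :\: Kset e eta Y) (non_adj v Y)%:R) _.
  rewrite mulr_natl -sumr_const.
  by apply: ler_sum => v; rewrite in_setD mem_Kset -ltNge => /andP[/ltW].
by rewrite lerDr sumr_ge0.
Qed.

Lemma sum_non_adj_le (eta : R) (A Y : {set V}) : 0 <= eta ->
  (\sum_(u in Y) non_adj u A)%:R
    <= eta * #|A|%:R * #|Y|%:R + #|A|%:R * #|Y :\: Kset e eta A|%:R.
Proof.
move=> eta_ge0; rewrite natr_sum (big_setID (Kset e eta A)) /=.
apply: lerD.
  apply: le_trans (_ : \sum_(u in Y :&: Kset e eta A) eta * #|A|%:R <= _).
    by apply: ler_sum => u; rewrite in_setI mem_Kset => /andP[].
  rewrite sumr_const -[X in X <= _]mulr_natr.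
  apply: ler_wpM2l; first exact: mulr_ge0.
  by rewrite ler_nat subset_leq_card ?subsetIl.
apply: le_trans (_ : \sum_(u in Y :\: Kset e eta A) (#|A|%:R : R) <= _).
  by apply: ler_sum => u _; rewrite ler_nat non_adj_le_card.
by rewrite sumr_const mulr_natr.
Qed.

Hypothesis e_sym : symmetric e.

Lemma exchange_non_adj (A Y : {set V}) :
  (\sum_(v in A) non_adj v Y = \sum_(u in Y) non_adj u A)%N.
Proof.
rewrite /non_adj exchange_big; apply: eq_bigr => u _.
by apply: eq_bigr => v _; rewrite e_sym.
Qed.

(* A vertex of [A] outside [K_eta(Y)] has more than [eta |Y|] non-neighbours
   in [Y]; count these non-edges from the side of [Y] instead. *)
Lemma card_setD_Kset_le (eta eta' : R) (A Y : {set V}) : 0 <= eta' ->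
  #|A :\: Kset e eta Y|%:R * (eta * #|Y|%:R)
    <= eta' * #|A|%:R * #|Y|%:R + #|A|%:R * #|Y :\: Kset e eta' A|%:R.
Proof.
move=> eta'_ge0; apply: le_trans (card_setD_Kset_mul_le eta A Y) _.
by rewrite exchange_non_adj sum_non_adj_le.
Qed.

End NonNeighbours.

Lemma setD_Tset_subset (R : realFieldType) (V : finType) (e : rel V)
    (eps : R) (X C : {set V}) :
  C :\: Tset e eps X \subset (C :\: Kset e (2 * eps ^+ 2) X)
    :|: (C :\: Kset e eps (Kset e (2 * eps ^+ 2) X)).
Proof.
apply/subsetP => v; rewrite /Tset in_setU !in_setD in_setI.
by case: (v \in C); case: (v \in Kset _ _ _); case: (v \in Kset _ _ _).
Qed.

Lemma card_bad_arith (R : realFieldType) (eps c k m b r : R) :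
  0 < eps -> eps < 3^-1 -> 0 <= m -> 0 <= b ->
  m < eps * c -> c <= k + m -> r < eps ^+ 2 * c ->
  b * (eps * k) <= 3 * eps ^+ 2 * c * k + c * r ->
  b <= 9 / 2 * eps * c.
Proof.
move=> eps_gt0 eps_lt m_ge0 b_ge0 m_lt c_le r_lt bad_le.
have c_gt0 : 0 < c by nra.
have k_ge : c * 2 <= 3 * k by nra.
have k_gt0 : 0 < k by lra.
have bk_le : b * k <= 3 * eps * c * k + eps * c * c.
  rewrite -(ler_pM2l eps_gt0); nra.
rewrite -(ler_pM2r k_gt0); nra.
Qed.

Theorem claim5p7 (R : realFieldType) (V : finType) (e : rel V)
    (eps delta p : R) (D S1 : {set V}) :
  simple_graph e ->
  0 < eps -> eps < 3^-1 ->
  0 < delta ->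
  0 < p -> p < 1 ->
  near_clique e (eps ^+ 3) D ->
  delta * (#|V|%:R) <= (#|D|%:R : R) ->
  let C := Kset e (eps ^+ 2) D :&: D in
  let X := S1 :&: C in
  (* X^* is representative *)
  (#|Kset e (eps ^+ 2) D :\: Kset e (2 * eps ^+ 2) X|%:R : R) < eps * (#|C|%:R) ->
  (#|Kset e (2 * eps ^+ 2) X :\: Kset e (3 * eps ^+ 2) C|%:R : R)
     < eps ^+ 2 * (#|C|%:R) ->
  (#|C :\: Tset e eps X|%:R : R) <= (11 / 2) * eps * (#|C|%:R).
Proof.
(* Only the representativeness of [X] matters, not how it was sampled. *)
move=> [e_sym _] eps_gt0 eps_lt _ _ _ _ _ C X.
set Ks := Kset e (2 * eps ^+ 2) X => rep1 rep2.
have missKs : (#|C :\: Ks|%:R : R) < eps * #|C|%:R.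
  by apply: le_lt_trans rep1; rewrite ler_nat subset_leq_card // setSD ?subsetIl.
have cardC : (#|C|%:R : R) <= #|Ks|%:R + #|C :\: Ks|%:R.
  rewrite -natrD ler_nat -(cardsID Ks C) leq_add2r.
  exact/subset_leq_card/subsetIr.
have cardCT : (#|C :\: Tset e eps X|%:R : R)
    <= #|C :\: Ks|%:R + #|C :\: Kset e eps Ks|%:R.
  rewrite -natrD ler_nat; apply: leq_trans (leq_card_setU _ _).
  exact/subset_leq_card/setD_Tset_subset.
have eps2_ge0 : 0 <= 3 * eps ^+ 2 by rewrite mulr_ge0 ?exprn_ge0 ?ltW.
have doubling := card_setD_Kset_le e_sym eps C Ks eps2_ge0.
have := card_bad_arith eps_gt0 eps_lt (ler0n _ _) (ler0n _ _) missKs cardC rep2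
  doubling.
lra.
Qed.
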